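(* Let $(\Omega,\mathcal{F},\mathbb{P})$ be a probability space, $L$ a Riesz space with $L^\infty\subset L\subset L^1$, and $\rho: L \to (-\infty,\infty]$ monotone, cash-invariant and positively homogeneous. Assume $\rho$ is not as conservative as the worst-case risk measure, i.e. there exists $X \in L$ with $\rho(X) < \mathrm{WC}(X) := \operatorname{ess\,sup}(-X)$. Then there exists a market $(S^0,S)$ on $(\Omega,\mathcal{F},\mathbb{P})$, satisfying the standing assumptions in the context and with returns in $L$, that does not admit arbitrage of the first kind but admits strong $\rho$-arbitrage.
   Context: A market: riskless asset with $S^0_0=1$, $S^0_1=1+r$, $r>-1$, and risky assets $S^1,\dots,S^d$ with constants $S^i_0>0$ and real-valued $\mathcal{F}$-measurable $S^i_1$; returns $R^i:=(S^i_1-S^i_0)/S^i_0$. Standing assumptions: nonredundancy (if $\theta\in\mathbb{R}^{1+d}$ with $\sum_{i=0}^d\theta^iS^i_t=0$ a.s. for $t\in\{0,1\}$ then $\theta=0$), $R^i\in L^1$, and $\mathbb{E}[R^i]\ne r$ for some $i$. Portfolio $\pi\in\mathbb{R}^d$ has excess return $X_\pi:=\pi\cdot(R-r\mathbf{1})$. Monotone: $X_1\le X_2$ a.s. implies $\rho(X_1)\ge\rho(X_2)$; cash-invariant: $\rho(X+c)=\rho(X)-c$; positively homogeneous: $\rho(\lambda X)=\lambda\rho(X)$ for $\lambda\ge 0$. Arbitrage of the first kind: a strategy $(\theta^0,\theta)\in\mathbb{R}^{1+d}$ with $\theta^0S^0_0+\theta\cdot S_0\le0$, $\theta^0S^0_1+\theta\cdot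 S_1\ge0$ a.s., and $\mathbb{P}[\theta^0S^0_1+\theta\cdot S_1>0]>0$. Strong $\rho$-arbitrage: for every $\pi\in\mathbb{R}^d$ there is $\pi'\in\mathbb{R}^d$ with $\mathbb{E}[X_{\pi'}]>\mathbb{E}[X_\pi]$ and $\rho(X_{\pi'})<\rho(X_\pi)$. *)

From HB Require Import structures.
From mathcomp Require Import all_boot all_order all_algebra.
From mathcomp Require Import all_classical all_reals all_analysis.
From mathcomp Require Import ess_sup_inf.
Set Implicit Arguments. Unset Strict Implicit. Unset Printing Implicit Defensive.
Import Order.TTheory GRing.Theory Num.Theory.
Local Open Scope classical_set_scope.
Local Open Scope ring_scope.

Section Defs.
Context (d : measure_display) (T : measurableType d) (R : realType)
        (P : probability T R).

Definition Linfty (X : T -> R) : Prop :=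
  measurable_fun setT X /\ exists c : R, {ae P, forall w, `|X w| <= c}.

Definition L1 (X : T -> R) : Prop := P.-integrable setT (EFin \o X).

Definition riesz_between (L : set (T -> R)) : Prop :=
  [/\ (forall X Y, L X -> L Y -> L (X \+ Y)),
      (forall (a : R) X, L X -> L (fun w => a * X w)),
      (forall X Y, L X -> L Y -> L (fun w => Num.max (X w) (Y w))),
      (forall X, Linfty X -> L X) &
      (forall X, L X -> L1 X)].

Definition rho_valued (L : set (T -> R)) (rho : (T -> R) -> \bar R) : Prop :=
  forall X, L X -> rho X != -oo%E.

Definition monotone_rho (L : set (T -> R)) (rho : (T -> R) -> \bar R) : Prop :=
  forall X1 X2, L X1 -> L X2 -> {ae P, forall w, X1 w <= X2 w} ->
    (rho X2 <= rho X1)%E.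

Definition cash_invariant (L : set (T -> R)) (rho : (T -> R) -> \bar R) : Prop :=
  forall X (c : R), L X -> rho (fun w => X w + c) = (rho X - c%:E)%E.

Definition pos_homogeneous (L : set (T -> R)) (rho : (T -> R) -> \bar R) : Prop :=
  forall X (lam : R), L X -> 0 <= lam -> rho (fun w => lam * X w) = (lam%:E * rho X)%E.

Definition WC (X : T -> R) : \bar R := ess_sup P (EFin \o (fun w => - X w)).

(* Market: riskless asset S^0_0 = 1, S^0_1 = 1 + r;
   risky assets S^i_0 = S0 i > 0, S^i_1 = S1 i (random). *)
Definition ret (n : nat) (S0 : 'I_n -> R) (S1 : 'I_n -> T -> R) (i : 'I_n) : T -> R :=
  fun w => (S1 i w - S0 i) / S0 i.

Definition excess_ret (n : nat) (r : R) (S0 : 'I_n -> R) (S1 : 'I_n -> T -> R)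
  (pi : 'I_n -> R) : T -> R :=
  fun w => \sum_(i < n) pi i * (ret S0 S1 i w - r).

Definition nonredundant (n : nat) (r : R) (S0 : 'I_n -> R) (S1 : 'I_n -> T -> R) : Prop :=
  forall (th0 : R) (th : 'I_n -> R),
    th0 * 1 + \sum_(i < n) th i * S0 i = 0 ->
    {ae P, forall w, th0 * (1 + r) + \sum_(i < n) th i * S1 i w = 0} ->
    th0 = 0 /\ (forall i, th i = 0).

Definition market (n : nat) (r : R) (S0 : 'I_n -> R) (S1 : 'I_n -> T -> R) : Prop :=
  [/\ -1 < r /\ (forall i, 0 < S0 i),
      (forall i, measurable_fun setT (S1 i)),
      nonredundant r S0 S1,
      (forall i, L1 (ret S0 S1 i)) &
      exists i, (\int[P]_w (ret S0 S1 i w)%:E != r%:E)%E].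

Definition arbitrage_first_kind (n : nat) (r : R) (S0 : 'I_n -> R)
  (S1 : 'I_n -> T -> R) : Prop :=
  exists (th0 : R) (th : 'I_n -> R),
    [/\ th0 * 1 + \sum_(i < n) th i * S0 i <= 0,
        {ae P, forall w, 0 <= th0 * (1 + r) + \sum_(i < n) th i * S1 i w} &
        (0 < P [set w | (0 < th0 * (1 + r) + \sum_(i < n) th i * S1 i w)%R])%E].

Definition strong_rho_arbitrage (rho : (T -> R) -> \bar R) (n : nat) (r : R)
  (S0 : 'I_n -> R) (S1 : 'I_n -> T -> R) : Prop :=
  forall pi : 'I_n -> R, exists pi' : 'I_n -> R,
    (\int[P]_w (excess_ret r S0 S1 pi w)%:E < \int[P]_w (excess_ret r S0 S1 pi' w)%:E)%E
    /\ (rho (excess_ret r S0 S1 pi') < rho (excess_ret r S0 S1 pi))%E.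

End Defs.

(* Shifting a position X with rho(X) < WC(X) by a cash amount strictly between
   rho(X) and WC(X) yields a position Y with rho(Y) < 0 that is negative with
   positive probability.  It is also nonnegative with positive probability,
   since Y <= 0 a.s. would give rho(Y) >= rho(0) = 0.  Adding a large multiple
   of the indicator of {Y >= 0} makes the mean positive while keeping rho < 0
   and both signs.  A single risky asset with this return and r = 0 admits no
   arbitrage of the first kind, and every position pi is beaten by a larger
   long position q: the mean grows with q while rho(q Z) = q rho(Z) -> -oo. *)

From HB Require Import structures.
From mathcomp Require Import all_boot all_order all_algebra.
From mathcomp Require Import all_classical all_reals all_analysis.
From mathcomp Require Import ess_sup_inf measurable_realfun lra.
Set Implicit Arguments. Unset Strict Implicit. Unset Printing Implicit Defensive.
Import Order.TTheory GRing.Theory Num.Theory.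
Local Open Scope classical_set_scope.
Local Open Scope ring_scope.

Section measure_lemmas.
Context d (T : measurableType d) (R : realType).
Implicit Types f : T -> R.

Lemma measurable_ge0 f : measurable_fun setT f -> measurable [set w | 0 <= f w].
Proof.
by move=> mf; rewrite -[X in measurable X]setTI; apply: measurable_fun_le.
Qed.

Lemma measurable_lt0 f : measurable_fun setT f -> measurable [set w | f w < 0].
Proof.
move=> mf; rewrite (_ : [set w | f w < 0] = ~` [set w | 0 <= f w]).
  exact/measurableC/measurable_ge0.
by apply/seteqP; split => w /=; rewrite ltNge => /negP.
Qed.

Lemma measurable_gt0 f : measurable_fun setT f -> measurable [set w | 0 < f w].
Proof.
move=> mf; rewrite (_ : [set w | 0 < f w] = [set w | - f w < 0]).
  exact/measurable_lt0/measurableT_comp.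
by apply/seteqP; split => w /=; rewrite oppr_lt0.
Qed.

Lemma ae_exists_in (mu : {measure set T -> \bar R}) (A : set T) (Q : T -> Prop) :
  measurable A -> (0 < mu A)%E -> {ae mu, forall w, Q w} -> exists2 w, A w & Q w.
Proof.
move=> mA muA [N [mN muN QN]]; apply: contrapT => noQ.
suff : (mu A <= mu N)%E by rewrite muN leNgt muA.
by apply: le_measure; rewrite ?inE // => w Aw; apply: QN => Qw; apply: noQ; exists w.
Qed.

Variable P : probability T R.

Lemma integral_add_indic_gt0 (Y : T -> R) (B : set T) :
  L1 P Y -> measurable B -> (0 < P B)%E ->
  exists2 c : R, 0 < c & (0 < \int[P]_w (Y w + c * \1_B w)%:E)%E.
Proof.
move=> iY mB PB.
have PBE : P B = (fine (P B))%:E.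
  by rewrite fineK // ge0_fin_numE // (le_lt_trans (probability_le1 P mB)) ?ltry.
have pB0 : 0 < fine (P B) by rewrite -lte_fin -PBE.
have EYE := fineK (integrable_fin_num measurableT iY).
set EY := fine _ in EYE.
exists ((`|EY| + 1) / fine (P B)); first by rewrite divr_gt0 // ltr_pwDr.
under eq_integral do rewrite EFinD EFinM.
rewrite integralD //; last exact/integrableZl/integrable_indic.
rewrite integralZl //; last exact: integrable_indic.
rewrite integral_indic // setIT [X in (_ * X)%E]PBE -EFinM divfK ?gt_eqF //.
rewrite -[X in (X + _)%E]EYE -EFinD lte_fin.
by have := ler_norm (- EY); rewrite normrN; lra.
Qed.

Lemma WC_gt_measure_lt0 f (y : R) : measurable_fun setT f ->
  (y%:E < WC P f)%E -> (0 < P [set w | (f w + y < 0)%R])%E.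
Proof.
move=> mf yWC; rewrite lt0e measure_ge0 andbT; apply: contraTneq yWC => P0.
rewrite -leNgt; apply/ess_supP; exists [set w | f w + y < 0]; split => //.
  by apply: measurable_lt0; apply: measurable_funD => //; exact: measurable_cst.
by move=> w /= /negP; rewrite -ltNge lte_fin; lra.
Qed.

End measure_lemmas.

Lemma large_multiple_below (R : realType) (p a : R) (z : \bar R) :
  a < 0 -> z != -oo%E -> exists q, [/\ 0 <= q, p < q & ((q * a)%:E < z)%E].
Proof.
move=> a0; case: z => [b| |] // _; last first.
  exists (`|p| + 1); split; rewrite ?ltry ?addr_ge0 //.
  by have := ler_norm p; lra.
have k0 : 0 < (`|b| + 1) / - a by rewrite divr_gt0 ?oppr_gt0 // ltr_pwDr.
have ka : (`|b| + 1) / - a * a = - (`|b| + 1).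
  by rewrite invrN mulrN mulNr divfK ?lt_eqF.
exists (`|p| + (`|b| + 1) / - a); split; first by rewrite addr_ge0 // ltW.
  by have := ler_norm p; lra.
rewrite lte_fin mulrDl ka.
have : `|p| * a <= 0 by rewrite mulr_ge0_le0 // ltW.
by have := ler_norm (- b); rewrite normrN; lra.
Qed.

Section risk_measure.
Context d (T : measurableType d) (R : realType) (P : probability T R).
Variables (L : set (T -> R)) (rho : (T -> R) -> \bar R).
Hypotheses (HL : riesz_between P L) (rho_fin : rho_valued L rho)
  (rho_mono : monotone_rho P L rho) (rho_cash : cash_invariant L rho)
  (rho_hom : pos_homogeneous L rho).

Lemma riesz_add X Y : L X -> L Y -> L (X \+ Y).
Proof. by case: HL => + _ _ _ _; apply. Qed.

Lemma riesz_scale (a : R) X : L X -> L (fun w => a * X w).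
Proof. by case: HL => _ + _ _ _; apply. Qed.

Lemma riesz_Linfty X : Linfty P X -> L X.
Proof. by case: HL => _ _ _ + _; apply. Qed.

Lemma riesz_L1 X : L X -> L1 P X.
Proof. by case: HL => _ _ _ _; apply. Qed.

Lemma riesz_measurable X : L X -> measurable_fun setT X.
Proof. by move/riesz_L1/integrableP => [/measurable_EFinP]. Qed.

Lemma riesz_cst (c : R) : L (fun=> c).
Proof.
apply: riesz_Linfty; split; first exact: measurable_cst.
by exists `|c|; apply: aeW.
Qed.

Lemma rho_cst0 : rho (fun=> 0) = 0%E.
Proof.
rewrite -(mul0e (rho (fun=> 0))) -rho_hom //; last exact: riesz_cst.
by congr rho; apply/funext => w; rewrite mul0r.
Qed.

Lemma rho_lt0_measure_ge0 Y : L Y -> (rho Y < 0)%E ->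
  (0 < P [set w | (0 <= Y w)%R])%E.
Proof.
move=> LY rhoY; rewrite lt0e measure_ge0 andbT; apply: contraTneq rhoY => P0.
rewrite -leNgt -rho_cst0; apply: rho_mono => //; first exact: riesz_cst.
exists [set w | 0 <= Y w]; split => //; first exact/measurable_ge0/riesz_measurable.
by move=> w /= /negP; rewrite -ltNge => /ltW.
Qed.

Lemma rho_lt_WC_cash_shift X : L X -> (rho X < WC P X)%E ->
  exists Y, [/\ L Y, (rho Y < 0)%E & (0 < P [set w | (Y w < 0)%R])%E].
Proof.
move=> LX ltWC.
have [m rhoXm] : exists m : R, rho X = m%:E.
  move: ltWC (rho_fin LX); case: (rho X) => [m| |] //; first by exists m.
  by rewrite ltNge leey.
have [y my yWC] : exists2 y : R, m < y & (y%:E < WC P X)%E.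
  move: ltWC; rewrite rhoXm; case: (WC P X) => [v| |] //=.
  - by rewrite lte_fin => mv; exists ((m + v) / 2); rewrite ?lte_fin; lra.
  - by move=> _; exists (m + 1); rewrite ?ltry // ltrDl.
exists (fun w => X w + y); split.
- by apply: riesz_add => //; exact: riesz_cst.
- by rewrite rho_cash // rhoXm -EFinB lte_fin subr_lt0.
- exact: WC_gt_measure_lt0 (riesz_measurable LX) yWC.
Qed.

Lemma exists_return_mean_gt0_rho_lt0 Y : L Y -> (rho Y < 0)%E ->
  (0 < P [set w | (Y w < 0)%R])%E ->
  exists Z, [/\ L Z, (0 < \int[P]_w (Z w)%:E)%E, (rho Z < 0)%E,
    (0 < P [set w | (0 < Z w)%R])%E & (0 < P [set w | (Z w < 0)%R])%E].
Proof.
move=> LY rhoY PYlt0; have mY := riesz_measurable LY.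
pose B := [set w | 0 <= Y w]; have mB : measurable B := measurable_ge0 mY.
have PB := rho_lt0_measure_ge0 LY rhoY.
have [c c0 EZ] := integral_add_indic_gt0 (riesz_L1 LY) mB PB.
pose Z w := Y w + c * \1_B w.
have LZ : L Z.
  apply: riesz_add => //; apply: riesz_Linfty; split.
    by apply: measurable_funM; [exact: measurable_cst | exact: measurable_indic].
  exists c; apply: aeW => w; rewrite indicE.
  by case: (w \in B); rewrite ?mulr1 ?mulr0 ?normr0 ?gtr0_norm // ltW.
have mZ := riesz_measurable LZ.
have ZB w : B w -> Z w = Y w + c by move=> Bw; rewrite /Z indicE mem_set ?mulr1.
have ZnB w : ~ B w -> Z w = Y w by move=> nBw; rewrite /Z indicE memNset ?mulr0 ?addr0.
exists Z; split => //.
- apply: le_lt_trans rhoY; apply: rho_mono => //; apply: aeW => w.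
  by rewrite lerDl mulr_ge0 ?(ltW c0) // indicE; case: (w \in B).
- apply: (lt_le_trans PB); apply: le_measure; rewrite ?inE //; first exact: measurable_gt0.
  by move=> w Bw; rewrite /= ZB //; move: Bw; rewrite /B /=; lra.
- apply: (lt_le_trans PYlt0); apply: le_measure; rewrite ?inE //; try exact: measurable_lt0.
  by move=> w /= Yw; rewrite ZnB // /B /= => /(lt_le_trans Yw); rewrite ltxx.
Qed.

Lemma scaled_return_arbitrage Z : L Z -> (0 < \int[P]_w (Z w)%:E)%E ->
  (rho Z < 0)%E -> forall p : R, exists q : R,
  (\int[P]_w (p * Z w)%:E < \int[P]_w (q * Z w)%:E)%E /\
  (rho (fun w => (q * Z w)%R) < rho (fun w => (p * Z w)%R))%E.
Proof.
move=> LZ EZ rhoZ p.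
have [a rhoZa a0] : exists2 a : R, rho Z = a%:E & a < 0.
  by move: rhoZ (rho_fin LZ); case: (rho Z) => [a| |] //; exists a.
have [q [q0 pq qa]] := large_multiple_below p a0 (rho_fin (riesz_scale p LZ)).
have intZ := riesz_L1 LZ.
have EqZ s : (\int[P]_w (s * Z w)%:E = s%:E * \int[P]_w (Z w)%:E)%E.
  by under eq_integral do rewrite EFinM; rewrite integralZl.
exists q; split; first by rewrite !EqZ lte_pmul2r ?lte_fin // integrable_fin_num.
by rewrite rho_hom // rhoZa -EFinM.
Qed.

End risk_measure.

Section one_asset_market.
Context d (T : measurableType d) (R : realType) (P : probability T R).
Variable Z : T -> R.

Definition unit_prices : 'I_1 -> R := fun=> 1.
Definition unit_payoffs : 'I_1 -> T -> R := fun _ w => 1 + Z w.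

Lemma ret_unit i : ret unit_prices unit_payoffs i = Z.
Proof. by apply/funext => w; rewrite /ret divr1 addrC addKr. Qed.

Lemma excess_ret_unit pi :
  excess_ret 0 unit_prices unit_payoffs pi = (fun w => pi ord0 * Z w).
Proof. by apply/funext => w; rewrite /excess_ret big_ord1 ret_unit subr0. Qed.

Hypotheses (mZ : measurable_fun setT Z) (Z_gt0 : (0 < P [set w | (0 < Z w)%R])%E)
  (Z_lt0 : (0 < P [set w | (Z w < 0)%R])%E).

Lemma unit_market_nonredundant : nonredundant P 0 unit_prices unit_payoffs.
Proof.
move=> th0 th; rewrite big_ord1 /unit_prices /unit_payoffs !mulr1 addr0 => cost0 ae0.
have [w /= Zw] := ae_exists_in (measurable_gt0 mZ) Z_gt0 ae0.
rewrite big_ord1 mulr1 => payoff0.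
have /eqP : th ord0 * Z w = 0 by lra.
rewrite mulf_eq0 (gt_eqF Zw) orbF => /eqP t0.
by split; [lra | move=> i; rewrite (ord1 i)].
Qed.

Lemma unit_market_no_arbitrage : ~ arbitrage_first_kind P 0 unit_prices unit_payoffs.
Proof.
move=> [th0 [th []]]; rewrite big_ord1 /unit_prices mulr1 => cost ae_pos pos.
have [tn|tp|t0] := ltgtP (th ord0) 0.
- have [w /= Zw] := ae_exists_in (measurable_gt0 mZ) Z_gt0 ae_pos.
  by rewrite big_ord1 /unit_payoffs addr0 mulr1; nra.
- have [w /= Zw] := ae_exists_in (measurable_lt0 mZ) Z_lt0 ae_pos.
  by rewrite big_ord1 /unit_payoffs addr0 mulr1; nra.
- move: pos; rewrite (_ : [set w | _] = set0) ?measure0 ?ltxx //.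
  apply/seteqP; split => w //=; rewrite big_ord1 t0 mul0r !addr0 mulr1.
  by move: cost; rewrite t0 mul0r addr0; lra.
Qed.

Lemma unit_market : L1 P Z -> (\int[P]_w (Z w)%:E != 0)%E ->
  market P 0 unit_prices unit_payoffs.
Proof.
move=> iZ EZ; split.
- by split => [|i]; [rewrite ltrN10 | rewrite ltr01].
- by move=> i; apply: measurable_funD => //; exact: measurable_cst.
- exact: unit_market_nonredundant.
- by move=> i; rewrite ret_unit.
- by exists ord0; rewrite ret_unit.
Qed.

End one_asset_market.

Theorem theorem3p23 (d : measure_display) (T : measurableType d) (R : realType)
  (P : probability T R) (L : set (T -> R)) (rho : (T -> R) -> \bar R) :
  riesz_between P L ->
  rho_valued L rho ->
  monotone_rho P L rho ->
  cash_invariant L rho ->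
  pos_homogeneous L rho ->
  (exists X, L X /\ (rho X < WC P X)%E) ->
  exists (n : nat) (r : R) (S0 : 'I_n -> R) (S1 : 'I_n -> T -> R),
    [/\ market P r S0 S1,
        (forall i, L (ret S0 S1 i)),
        ~ arbitrage_first_kind P r S0 S1 &
        strong_rho_arbitrage P rho r S0 S1].
Proof.
move=> HL rho_fin rho_mono rho_cash rho_hom [X [LX ltWC]].
have [Y [LY rhoY PY]] := rho_lt_WC_cash_shift HL rho_fin rho_cash LX ltWC.
have [Z [LZ EZ rhoZ Z_gt0 Z_lt0]] :=
  exists_return_mean_gt0_rho_lt0 HL rho_mono rho_hom LY rhoY PY.
have mZ := riesz_measurable HL LZ.
exists 1%N, 0, (unit_prices R), (unit_payoffs Z); split.
- apply: (unit_market mZ Z_gt0); [exact (riesz_L1 HL LZ) | by rewrite (gt_eqF EZ)].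
- by move=> i; rewrite ret_unit.
- exact: unit_market_no_arbitrage.
- move=> pi; rewrite !excess_ret_unit.
  have [q [Eq rhoq]] := scaled_return_arbitrage HL rho_fin rho_hom LZ EZ rhoZ (pi ord0).
  by exists (fun=> q); rewrite excess_ret_unit.
Qed.
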